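(* Let $\Delta\ge 4$ be even, $\phi=\pi/\Delta$, and for $j\in\{0,1,\dots,\Delta/2-1\}$ let $$|j_+\rangle=\tfrac{1}{\sqrt2}\big(|0\rangle+e^{ij\phi}|1\rangle\big),\qquad |j_-\rangle=\tfrac{1}{\sqrt2}\big(|0\rangle-e^{ij\phi}|1\rangle\big).$$ Then for all $j\neq k$ in $\{0,\dots,\Delta/2-1\}$ and all signs $s,t\in\{+,-\}$, the probability of observing the outcome $j_s$ when the state $|k_t\rangle$ is measured in the basis $M(j)=\{|j_+\rangle,|j_-\rangle\}$ satisfies $$|\langle j_s|k_t\rangle|^2\le\cos^2\!\left(\frac{\pi}{2\Delta}\right).$$
   Context: Here $i$ in the exponent denotes the imaginary unit, $|0\rangle,|1\rangle$ the computational basis of a qubit, and measuring a state $|\psi\rangle$ in the orthonormal basis $M(j)$ yields outcome $j_s$ with probability $|\langle j_s|\psi\rangle|^2$. *)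

From Stdlib Require Import Reals.
From Coquelicot Require Import Coquelicot.
Open Scope R_scope.

Definition cexpi (theta : R) : C := (cos theta, sin theta).

Record qubit := Qubit { amp0 : C ; amp1 : C }.

Definition phi (Delta : nat) : R := PI / INR Delta.

(* |j_s> = (|0> + sgn(s) e^{i j phi} |1>)/sqrt 2 ; s = true means '+', false '-' *)
Definition ket (Delta j : nat) (s : bool) : qubit :=
  Qubit (RtoC (/ sqrt 2))
        (Cmult (RtoC ((if s then 1 else -1) * / sqrt 2)) (cexpi (INR j * phi Delta))).

Definition braket (u v : qubit) : C :=
  Cplus (Cmult (Cconj (amp0 u)) (amp0 v)) (Cmult (Cconj (amp1 u)) (amp1 v)).

Definition outcome_prob (u v : qubit) : R := (Cmod (braket u v)) ^ 2.

(** Each [ket Delta j s] is an equatorial state [(|0> + sign s e^{i x}|1>)/sqrt 2]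
    with [x = j phi], and for two such states [|<u|v>|^2 = (1 +- cos (y - x)) / 2].
    For distinct [j, k < Delta] the angle [|k - j| phi] lies in
    [[phi, pi - phi]], so [|cos ((k - j) phi)| <= cos phi] and the probability is at
    most [(1 + cos phi) / 2 = cos^2 (phi / 2)]. *)

From Stdlib Require Import Reals Lra Lia.
From Coquelicot Require Import Coquelicot.
Open Scope R_scope.

Definition sign (s : bool) : R := if s then 1 else -1.

Lemma sign_sqr (s : bool) : sign s * sign s = 1.
Proof. destruct s; simpl; ring. Qed.

Definition equator_ket (x : R) (s : bool) : qubit :=
  Qubit (RtoC (/ sqrt 2)) (Cmult (RtoC (sign s * / sqrt 2)) (cexpi x)).

Lemma ket_equator_ket (Delta j : nat) (s : bool) :
  ket Delta j s = equator_ket (INR j * phi Delta) s.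
Proof. reflexivity. Qed.

Lemma inv_sqrt2_sqr : / sqrt 2 * / sqrt 2 = / 2.
Proof. rewrite <- Rinv_mult, sqrt_sqrt; lra. Qed.

Lemma braket_equator_ket (x y : R) (s t : bool) :
  braket (equator_ket x s) (equator_ket y t) =
  ((1 + sign s * sign t * cos (y - x)) / 2, sign s * sign t * sin (y - x) / 2).
Proof.
  unfold braket, equator_ket, cexpi; simpl.
  rewrite cos_minus, sin_minus.
  apply injective_projections; simpl;
    unfold Rdiv; rewrite <- inv_sqrt2_sqr; ring.
Qed.

Lemma outcome_prob_equator_ket (x y : R) (s t : bool) :
  outcome_prob (equator_ket x s) (equator_ket y t) =
  (1 + sign s * sign t * cos (y - x)) / 2.
Proof.
  unfold outcome_prob; rewrite Cmod2_alt, braket_equator_ket; simpl.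
  pose proof (sin2_cos2 (y - x)) as Hsc; unfold Rsqr in Hsc.
  transitivity ((1 + 2 * sign s * sign t * cos (y - x)
                 + (sign s * sign s) * (sign t * sign t)
                   * (sin (y - x) * sin (y - x) + cos (y - x) * cos (y - x))) / 4);
    [field | rewrite !sign_sqr, Hsc; field].
Qed.

Lemma cos_half_sqr (x : R) : cos (x / 2) ^ 2 = (1 + cos x) / 2.
Proof.
  replace x with (2 * (x / 2)) at 2 by field.
  rewrite cos_2a_cos; field.
Qed.

Lemma Rabs_cos_le (a x : R) : 0 <= a -> a <= Rabs x <= PI - a -> Rabs (cos x) <= cos a.
Proof.
  intros Ha [Hax HxP].
  replace (cos x) with (cos (Rabs x))
    by (unfold Rabs; destruct (Rcase_abs x); [apply cos_neg | reflexivity]).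
  apply Rabs_le; split.
  - rewrite <- Rtrigo_facts.cos_pi_minus; apply cos_decr_1; lra.
  - apply cos_decr_1; pose proof PI_RGT_0; lra.
Qed.

Lemma Rabs_cos_mult_phi (Delta d : nat) :
  (0 < d < Delta)%nat -> Rabs (cos (INR d * phi Delta)) <= cos (phi Delta).
Proof.
  intros Hd.
  assert (HD : 0 < INR Delta) by (apply lt_0_INR; lia).
  assert (Hphi : 0 < phi Delta) by (apply Rdiv_lt_0_compat; [apply PI_RGT_0 | lra]).
  assert (HPI : PI = INR Delta * phi Delta) by (unfold phi; field; lra).
  assert (Hd1 : 1 <= INR d) by (apply (le_INR 1); lia).
  assert (HdD : INR d + 1 <= INR Delta) by (rewrite <- S_INR; apply le_INR; lia).
  apply Rabs_cos_le; [lra |].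
  rewrite Rabs_pos_eq by (apply Rmult_le_pos; [apply pos_INR | lra]).
  rewrite HPI; nra.
Qed.

Lemma Rabs_cos_phi_diff (Delta j k : nat) :
  (j < Delta)%nat -> (k < Delta)%nat -> j <> k ->
  Rabs (cos (INR k * phi Delta - INR j * phi Delta)) <= cos (phi Delta).
Proof.
  intros Hj Hk Hjk.
  destruct (Nat.lt_total j k) as [Hlt | [Heq | Hgt]]; [| contradiction |].
  - replace (INR k * phi Delta - INR j * phi Delta) with (INR (k - j) * phi Delta)
      by (rewrite minus_INR by lia; ring).
    apply Rabs_cos_mult_phi; lia.
  - replace (INR k * phi Delta - INR j * phi Delta) with (- (INR (j - k) * phi Delta))
      by (rewrite minus_INR by lia; ring).
    rewrite cos_neg; apply Rabs_cos_mult_phi; lia.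
Qed.

Theorem lemma7 (Delta : nat) :
  (4 <= Delta)%nat -> Nat.Even Delta ->
  forall (j k : nat), (j < Delta / 2)%nat -> (k < Delta / 2)%nat -> j <> k ->
  forall (s t : bool),
    outcome_prob (ket Delta j s) (ket Delta k t) <= (cos (PI / (2 * INR Delta))) ^ 2.
Proof.
  intros _ _ j k Hj Hk Hjk s t.
  assert (Hhalf : (Delta / 2 <= Delta)%nat) by (apply Nat.Div0.div_le_upper_bound; lia).
  rewrite !ket_equator_ket, outcome_prob_equator_ket.
  replace (PI / (2 * INR Delta)) with (phi Delta / 2)
    by (unfold phi; field; apply not_0_INR; lia).
  rewrite cos_half_sqr.
  pose proof (Rabs_cos_phi_diff Delta j k ltac:(lia) ltac:(lia) Hjk) as Hcos.
  apply Rabs_le_between in Hcos.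
  destruct s, t; simpl; lra.
Qed.
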